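(* Let $m\ge 2$ and $\alpha\in[0,1]$. Every deterministic voting rule $f$ that takes ranked preferences with intensities as input has, under mandatory elicitation of the intensities, metric distortion $$\mathsf{dist}_\alpha(f)\;\ge\;1+2\max\left(\alpha,\ \frac{1-\alpha^{\lfloor m/2\rfloor}}{1+\alpha^{\lfloor m/2\rfloor}}\right).$$
   Context: An election $\mathcal E=(N,A,\vec\sigma)$ has a finite set $N$ of $n$ agents, a set $A$ of $m$ alternatives, and a profile $\vec\sigma=(\sigma_1,\dots,\sigma_n)$. Each $\sigma_i=(\pi_i,\Join_i)$ consists of a bijection $\pi_i:[m]\to A$, where $\pi_i(1)$ is agent $i$'s most preferred alternative, and a map $\Join_i:[m-1]\to\{\succ,\succ\!\!\succ\}$. Here $\Join_i(j)=\,\succ\!\!\succ$ means a strong preference for $\pi_i(j)$ over $\pi_i(j+1)$, and $\Join_i(j)=\,\succ$ means an ordinary preference. A metric $d$ on $N\cup A$ is nonnegative and symmetric, satisfies the triangle inequality, and has $d(x,x)=0$. For $\alpha\in[0,1]$, the profile $\vec\sigma$ is $\alpha$-consistent with $d$ under mandatory elicitation if for every agent $i$ and every $j\in[m-1]$: - if $\Join_i(j)=\,\succ$, then $d(i,\pi_i(j+1))\ge d(i,\pi_i(j))>\alpha\, d(i,\pi_i(j+1))$; - if $\Join_i(j)=\,\succ\!\!\succ$, then $d(i,\pi_i(j))\le \alpha\, d(i,\pi_i(j+1))$. The social cost of $a$ is $\mathrm{sc}_d(a)=\sum_{i\in N}d(i,a)$. The distortion of $a$ is $\mathsf{dist}_\alpha(a,\mathcal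 E)=\sup_{d}\ \mathrm{sc}_d(a)/\min_{b\in A}\mathrm{sc}_d(b)$, where the supremum is over metrics $d$ with which $\vec\sigma$ is $\alpha$-consistent under mandatory elicitation. A deterministic voting rule $f$ maps every profile (for any number of agents) over the $m$ alternatives to an alternative. Its distortion is $\mathsf{dist}_\alpha(f)=\sup_{\mathcal E}\mathsf{dist}_\alpha(f(\vec\sigma),\mathcal E)$, with the supremum over all elections with $m$ alternatives. *)

From HB Require Import structures.
From mathcomp Require Import all_boot all_order all_algebra all_fingroup.
From mathcomp Require Import all_classical all_reals ereal.
Set Implicit Arguments. Unset Strict Implicit. Unset Printing Implicit Defensive.
Import Order.TTheory GRing.Theory Num.Theory.
Local Open Scope ring_scope.

(* Alternatives are 'I_m; positions in a ranking are 'I_m (0-indexed).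
   A ballot (pi, J): pi : {perm 'I_m} maps position k to an alternative
   (pi 0 is the favourite); J : {ffun 'I_m.-1 -> bool}, J j = true means a
   strong preference (>>) between positions j and j+1, false means (>). *)
Definition ballot (m : nat) := ({perm 'I_m} * {ffun 'I_m.-1 -> bool})%type.

Definition profile (n m : nat) := {ffun 'I_n -> ballot m}.

Definition point (n m : nat) := ('I_n + 'I_m)%type.

Definition is_metric (R : realType) (T : Type) (d : T -> T -> R) : Prop :=
  (forall x y, 0 <= d x y) /\ (forall x y, d x y = d y x) /\
  (forall x, d x x = 0) /\ (forall x y z, d x z <= d x y + d y z).

Definition consistent (R : realType) (alpha : R) (n m : nat)
    (sigma : profile n m) (d : point n m -> point n m -> R) : Prop :=
  forall (i : 'I_n) (j : 'I_m.-1) (k1 k2 : 'I_m),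
    val k1 = val j -> val k2 = (val j).+1 ->
    let a := (sigma i).1 k1 in
    let b := (sigma i).1 k2 in
    if (sigma i).2 j
    then d (inl i) (inr a) <= alpha * d (inl i) (inr b)
    else (d (inl i) (inr a) <= d (inl i) (inr b)) &&
         (alpha * d (inl i) (inr b) < d (inl i) (inr a)).

Definition social_cost (R : realType) (n m : nat)
    (d : point n m -> point n m -> R) (a : 'I_m) : R :=
  \sum_(i < n) d (inl i) (inr a).

(* min_{b in A} sc_d(b) (A is nonempty since a : 'I_m). *)
Definition min_cost (R : realType) (n m : nat)
    (d : point n m -> point n m -> R) (a : 'I_m) : R :=
  \big[Num.min/social_cost d a]_(b < m) social_cost d b.

(* The ratio sc_d(a) / min_b sc_d(b) as an extended real, with the
   conventions x/0 = +oo for x > 0 and 0/0 = 1. *)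
Definition cost_ratio (R : realType) (n m : nat)
    (d : point n m -> point n m -> R) (a : 'I_m) : \bar R :=
  if 0 < min_cost d a then ((social_cost d a) / (min_cost d a))%:E
  else if 0 < social_cost d a then +oo%E else 1%E.

Definition distortion (R : realType) (alpha : R) (n m : nat)
    (sigma : profile n m) (a : 'I_m) : \bar R :=
  ereal_sup [set r | exists d : point n m -> point n m -> R,
     [/\ is_metric d, consistent alpha sigma d & r = cost_ratio d a]].

Definition voting_rule (m : nat) := forall n : nat, profile n m -> 'I_m.

Definition rule_distortion (R : realType) (alpha : R) (m : nat)
    (f : voting_rule m) : \bar R :=
  ereal_sup [set r | exists (n : nat) (sigma : profile n m),
     r = distortion alpha sigma (f n sigma)].

From Pilot Require Import Defs.
From HB Require Import structures.
From mathcomp Require Import all_boot all_order all_algebra all_fingroup.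
From mathcomp Require Import all_classical all_reals ereal.
From mathcomp Require Import lra ring zify.
Import Order.TTheory GRing.Theory Num.Theory.
Set Implicit Arguments. Unset Strict Implicit. Unset Printing Implicit Defensive.
Local Open Scope ring_scope.

(* Two agents suffice.  For the bound 1 + 2 alpha, the agents have strong
   preferences and swap their two favourites; whichever agent does not rank the
   winner second is placed on a line so that the winner costs at least
   2 + 4 alpha while that agent's second choice costs 2.  For the other bound, the agents have
   weak preferences in reverse orders, so one of them ranks the winner at
   position k = m/2 or later; in the sup-norm plane its alternatives grow
   geometrically with ratio t < 1/alpha, capped at T = t^k, which makes the
   ratio (3T - 1)/(T + 1).  Letting t tend to 1/alpha gives
   1 + 2 (1 - alpha^k)/(1 + alpha^k). *)

Section Metrics.
Variables (R : realType) (T : Type).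

Definition line_dist (u : T -> R) (p q : T) : R := `|u p - u q|.

Lemma line_dist_metric (u : T -> R) : is_metric (line_dist u).
Proof.
rewrite /line_dist; split; [|split; [|split]] => *.
- exact: normr_ge0.
- exact: distrC.
- by rewrite subrr normr0.
- exact: ler_distD.
Qed.

Lemma max_metric (d1 d2 : T -> T -> R) :
  is_metric d1 -> is_metric d2 -> is_metric (fun p q => Num.max (d1 p q) (d2 p q)).
Proof.
move=> [d1_ge0 [d1C [d1xx d1_tri]]] [d2_ge0 [d2C [d2xx d2_tri]]].
split; [|split; [|split]] => [x y|x y|x|x y z].
- by rewrite le_max d1_ge0.
- by rewrite d1C d2C.
- by rewrite d1xx d2xx maxxx.
- rewrite ge_max; apply/andP; split.
  + by apply: le_trans (d1_tri x y z) _; apply: lerD; rewrite le_max lexx.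
  + by apply: le_trans (d2_tri x y z) _; apply: lerD; rewrite le_max lexx orbT.
Qed.

End Metrics.

Section RealFacts.
Variable R : realType.

Lemma bernoulli_ineq (s : R) (n : nat) : 0 <= s -> 1 - (1 - s) *+ n <= s ^+ n.
Proof.
move=> s_ge0; elim: n => [|n IHn]; first by rewrite mulr0n subr0 expr0.
rewrite exprS mulrSr; apply: le_trans (ler_wpM2l s_ge0 IHn).
have := mulr_ge0 (mulrn_wge0 n (@ler01 R)) (sqr_ge0 (1 - s)).
rewrite -mulr_natl; nra.
Qed.

Lemma exists_ratio_pow_gt (alpha T : R) (k : nat) :
  0 <= alpha -> alpha < 1 -> (0 < k)%N -> alpha ^+ k * T < 1 ->
  exists t, [/\ 1 < t, alpha * t < 1 & T < t ^+ k].
Proof.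
move=> a_ge0 a_lt1 k_gt0 aT_lt1.
have [->|a_neq0] := eqVneq alpha 0.
  exists (2 + `|T|); rewrite mul0r; split=> //; first by have := normr_ge0 T; lra.
  apply: lt_le_trans (ler_eXnr k_gt0 _); first by have := ler_norm T; lra.
  by have := normr_ge0 T; lra.
have a_gt0 : 0 < alpha by rewrite lt_def a_neq0.
(* By Bernoulli, s := 1 - e with e small is in (alpha, 1) and s^k > alpha^k T;
   take t := s / alpha. *)
pose M := Num.max (alpha ^+ k * T) alpha.
have M_lt1 : M < 1 by rewrite gt_max aT_lt1.
have [aT_leM a_leM] : alpha ^+ k * T <= M /\ alpha <= M by rewrite !le_max !lexx orbT.
pose e := (1 - M) / (2 * k%:R).
have k_ge1 : 1 <= k%:R :> R by rewrite ler1n.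
have e_gt0 : 0 < e by rewrite divr_gt0 //; lra.
have ek : e *+ k = (1 - M) / 2.
  by rewrite -mulr_natr /e; field; rewrite gt_eqF //; lra.
have e_le : e <= (1 - M) / 2 by rewrite -ek -mulr_natr ler_peMr // ltW.
pose s := 1 - e.
exists (s / alpha); split.
- by rewrite ltr_pdivlMr // mul1r /s; lra.
- by rewrite mulrC divfK // /s; lra.
- rewrite expr_div_n ltr_pdivlMr ?exprn_gt0 // mulrC.
  apply: lt_le_trans (bernoulli_ineq k _); last by rewrite /s; lra.
  have -> : 1 - s = e by rewrite /s; lra.
  by rewrite ek; lra.
Qed.

End RealFacts.

Definition position (m : nat) (s : ballot m) (a : 'I_m) : nat := val (s.1^-1%g a).

Lemma position_perm (m : nat) (s : ballot m) (k : 'I_m) : position s (s.1 k) = val k.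
Proof. by rewrite /position permK. Qed.

Section Distortion.
Variables (R : realType) (alpha : R) (n m : nat).
Implicit Types (sigma : profile n m) (d : Defs.point n m -> Defs.point n m -> R).

Lemma consistent_by_position sigma d (D : 'I_n -> nat -> R) :
  (forall i a, d (inl i) (inr a) = D i (position (sigma i) a)) ->
  (forall i (j : 'I_m.-1), if (sigma i).2 j then D i j <= alpha * D i j.+1
     else (D i j <= D i j.+1) && (alpha * D i j.+1 < D i j)) ->
  consistent alpha sigma d.
Proof.
by move=> dD D_chain i j k1 k2 k1j k2j; rewrite /= !dD !position_perm k1j k2j.
Qed.

Lemma cost_ratio_ge d (a b : 'I_m) (r : R) :
  (forall c, 0 < social_cost d c) -> 0 <= r ->
  social_cost d b * r <= social_cost d a -> (r%:E <= cost_ratio d a)%E.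
Proof.
move=> sc_gt0 r_ge0 hr.
have min_gt0 : 0 < min_cost d a by apply: lt_bigmin.
have min_le : min_cost d a <= social_cost d b by apply: bigmin_le.
rewrite /cost_ratio min_gt0 lee_fin ler_pdivlMr // mulrC.
exact: le_trans (ler_wpM2r r_ge0 min_le) hr.
Qed.

Lemma rule_distortion_ge (f : voting_rule m) sigma d (b : 'I_m) (r : R) :
  is_metric d -> consistent alpha sigma d -> (forall c, 0 < social_cost d c) ->
  0 <= r -> social_cost d b * r <= social_cost d (f n sigma) ->
  (r%:E <= rule_distortion alpha f)%E.
Proof.
move=> d_metric d_cons sc_gt0 r_ge0 hr.
apply: le_trans (cost_ratio_ge sc_gt0 r_ge0 hr) _.
apply: (@le_trans _ _ (distortion alpha sigma (f n sigma))).
  by apply: ereal_sup_ubound; exists d.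
by apply: ereal_sup_ubound; exists n, sigma.
Qed.

End Distortion.

Lemma social_cost_two_agents (R : realType) (m : nat)
    (d : Defs.point 2 m -> Defs.point 2 m -> R) (i0 : 'I_2) (a : 'I_m) (x y : R) :
  (forall i, d (inl i) (inr a) = if i == i0 then x else y) ->
  social_cost d a = x + y.
Proof.
move=> dE; rewrite /social_cost big_ord_recl big_ord1 !dE {dE}.
by case: i0 => [[|[|]] ?] //=; rewrite addrC.
Qed.

Definition swap01 (p : nat) : nat :=
  if p == 0%N then 1%N else if p == 1%N then 0%N else p.

Lemma swap01K : involutive swap01.
Proof. by case=> [|[|p]]. Qed.

Section SwapProfile.
Variable m : nat.

Definition swap_profile : profile 2 m.+2 :=
  [ffun i => (if i == 0 then 1%g else tperm 0 1, [ffun=> true])].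

Lemma position_swap_profile (i : 'I_2) (a : 'I_m.+2) :
  position (swap_profile i) a = if i == 0 then val a else swap01 (val a).
Proof.
rewrite /position ffunE; case: ifP => _ /=; first by rewrite invg1 perm1.
rewrite tpermV; case: tpermP => [->|->|/eqP a0 /eqP a1] //.
by move: a0 a1; rewrite -!(inj_eq val_inj) /swap01 /= => /negPf-> /negPf->.
Qed.

Lemma position_swap_profile_other (i i' : 'I_2) (a : 'I_m.+2) :
  position (swap_profile i') a =
  if i == i' then position (swap_profile i) a else swap01 (position (swap_profile i) a).
Proof.
rewrite !position_swap_profile.
by case: i i' => [[|[|//]] ?] [[|[|//]] ?]; rewrite /= ?swap01K.
Qed.

Lemma exists_position_neq1 (a : 'I_m.+2) :
  exists i : 'I_2, position (swap_profile i) a != 1%N.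
Proof.
have [a1|a_neq1] := eqVneq (val a) 1%N.
  by exists 1; rewrite position_swap_profile /= a1.
by exists 0; rewrite position_swap_profile.
Qed.

End SwapProfile.

Section StrongLowerBound.
Variables (R : realType) (alpha : R).

(* The focal agent sits at 2 alpha and the other agent at 2 + 2 alpha on a
   line; the focal agent's favourite is at 0, its second choice (the other
   agent's favourite) at 2 + 2 alpha, and the alternative it ranks p >= 2 at
   10 alpha^-p, far enough for every preference to be strong. *)
Definition strong_coord (p : nat) : R :=
  if p == 0%N then 0 else if p == 1%N then 2 + 2 * alpha else 10 * alpha^-1 ^+ p.

Lemma geometric_chain (x : R) (p : nat) : 0 < alpha -> alpha <= 1 -> 0 <= x <= 10 ->
  `|x - 10 * alpha^-1 ^+ p| <= alpha * `|x - 10 * alpha^-1 ^+ p.+1|.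
Proof.
move=> a_gt0 a_le1 /andP[x_ge0 x_le10].
have aV_ge1 : 1 <= alpha^-1 by rewrite invf_ge1.
have [aVp_ge1 aVSp_ge1] := (exprn_ege1 p aV_ge1, exprn_ege1 p.+1 aV_ge1).
have aVSp : alpha * alpha^-1 ^+ p.+1 = alpha^-1 ^+ p.
  by rewrite exprS mulrA mulfV ?gt_eqF // mul1r.
have ax_le : alpha * x <= x by rewrite ler_piMl.
rewrite !ler0_norm; [|lra|lra].
by rewrite mulrN mulrBr mulrCA aVSp; lra.
Qed.

Lemma strong_chain_focal (p : nat) : 0 < alpha -> alpha <= 1 ->
  `|2 * alpha - strong_coord p| <= alpha * `|2 * alpha - strong_coord p.+1|.
Proof.
move=> a_gt0 a_le1.
have aV2 : alpha * (10 * alpha^-1 ^+ 2) = 10 * alpha^-1.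
  by rewrite expr2; field; rewrite gt_eqF.
have aV_ge1 : 1 <= alpha^-1 by rewrite invf_ge1.
have focal_second : 2 * alpha - (2 + 2 * alpha) = - 2 by lra.
rewrite /strong_coord; case: p => [|[|p]] /=.
- by rewrite subr0 focal_second normrN !ger0_norm; lra.
- rewrite focal_second normrN ger0_norm // ler0_norm; last first.
    by have := exprn_ege1 2 aV_ge1; lra.
  have : alpha * (2 * alpha) <= 2 * alpha by rewrite ler_piMl //; lra.
  by rewrite mulrN mulrBr aV2; lra.
- by apply: geometric_chain => //; lra.
Qed.

Lemma strong_chain_other (p : nat) : 0 < alpha -> alpha <= 1 ->
  `|2 + 2 * alpha - strong_coord (swap01 p)| <=
  alpha * `|2 + 2 * alpha - strong_coord (swap01 p.+1)|.
Proof.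
move=> a_gt0 a_le1.
have aV2 : alpha * (10 * alpha^-1 ^+ 2) = 10 * alpha^-1.
  by rewrite expr2; field; rewrite gt_eqF.
have aV_ge1 : 1 <= alpha^-1 by rewrite invf_ge1.
rewrite /strong_coord; case: p => [|[|p]] /=.
- by rewrite subrr normr0 mulr_ge0 ?normr_ge0 ?ltW.
- rewrite subr0 ger0_norm; last lra.
  rewrite ler0_norm; last by have := exprn_ege1 2 aV_ge1; lra.
  have : alpha * (2 + 2 * alpha) <= 2 + 2 * alpha by rewrite ler_piMl //; lra.
  by rewrite mulrN mulrBr aV2; lra.
- by apply: geometric_chain => //; lra.
Qed.

Lemma strong_cost_ge (p : nat) : 0 < alpha -> alpha <= 1 -> p != 1%N ->
  2 * (1 + 2 * alpha) <=
  `|2 * alpha - strong_coord p| + `|2 + 2 * alpha - strong_coord p|.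
Proof.
move=> a_gt0 a_le1; rewrite /strong_coord; case: p => [|[|p]] //= _.
  by rewrite !subr0 !ger0_norm; lra.
have aV_ge1 : 1 <= alpha^-1 by rewrite invf_ge1.
have aVp_ge1 := exprn_ege1 p.+2 aV_ge1.
by rewrite !ler0_norm; lra.
Qed.

End StrongLowerBound.

Lemma rule_distortion_ge_strong (R : realType) (alpha : R) (m : nat)
    (f : voting_rule m.+2) :
  0 < alpha -> alpha <= 1 -> ((1 + 2 * alpha)%:E <= rule_distortion alpha f)%E.
Proof.
move=> a_gt0 a_le1.
have [iA c_pos] := exists_position_neq1 (f 2 (swap_profile m)).
pose agent_coord (i : 'I_2) : R := if i == iA then 2 * alpha else 2 + 2 * alpha.
pose u (z : Defs.point 2 m.+2) : R := match z with
  | inl i => agent_coord i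
  | inr a => strong_coord alpha (position (swap_profile m iA) a) end.
have sc_E (a : 'I_m.+2) : social_cost (line_dist u) a =
    `|2 * alpha - u (inr a)| + `|2 + 2 * alpha - u (inr a)|.
  apply: (social_cost_two_agents (i0 := iA)) => i.
  by rewrite /line_dist /= /agent_coord; case: ifP.
pose b := (swap_profile m iA).1 1.
apply: (rule_distortion_ge (sigma := swap_profile m) (d := line_dist u) (b := b)).
- exact: line_dist_metric.
- pose D i p := `|agent_coord i - strong_coord alpha (if i == iA then p else swap01 p)|.
  apply: (consistent_by_position (D := D)) => [i a|i j].
    by rewrite /line_dist /= (position_swap_profile_other i).
  rewrite !ffunE /D /agent_coord; case: ifP => _.
  + exact: strong_chain_focal.
  + exact: strong_chain_other.
- move=> a; rewrite sc_E.
  have := ler_norm (2 + 2 * alpha - u (inr a)).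
  have := ler_norm (- (2 * alpha - u (inr a))).
  by rewrite normrN; lra.
- lra.
- rewrite !sc_E /= position_perm.
  have -> : strong_coord alpha 1 = 2 + 2 * alpha by [].
  rewrite subrr normr0 addr0.
  have -> : 2 * alpha - (2 + 2 * alpha) = - 2 by lra.
  by rewrite normrN ger0_norm //; apply: strong_cost_ge.
Qed.

Section ReverseProfile.
Variable m : nat.

Definition reverse_profile : profile 2 m.+2 :=
  [ffun i => (if i == 0 then 1%g else perm (@rev_ord_inj m.+2), [ffun=> false])].

Lemma position_reverse_profile (i : 'I_2) (a : 'I_m.+2) :
  position (reverse_profile i) a = if i == 0 then val a else (m.+1 - val a)%N.
Proof.
rewrite /position ffunE; case: ifP => _ /=; first by rewrite invg1 perm1.
suff -> : (perm (@rev_ord_inj m.+2))^-1%g a = rev_ord a by [].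
by apply: (@perm_inj _ (perm (@rev_ord_inj m.+2))); rewrite permKV permE rev_ordK.
Qed.

Lemma exists_position_ge_half (a : 'I_m.+2) :
  exists i : 'I_2, ((m.+2)./2 <= position (reverse_profile i) a)%N.
Proof.
have := odd_double_half m; rewrite -addnn => m_halves.
have a_lt := ltn_ord a.
case: (leqP (m.+2)./2 (val a)) => a_half; [exists 0 | exists 1];
  rewrite position_reverse_profile //=; move: a_half => /=; lia.
Qed.

End ReverseProfile.

Lemma capped_geometric_chain (R : realType) (alpha t : R) (k p : nat) :
  0 <= alpha -> 1 < t -> alpha * t < 1 ->
  (t ^+ minn p k <= t ^+ minn p.+1 k) && (alpha * t ^+ minn p.+1 k < t ^+ minn p k).
Proof.
move=> a_ge0 t_gt1 at_lt1.
have tp_gt0 q : 0 < t ^+ q by apply: exprn_gt0; lra.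
have [p_lt_k|k_le_p] := ltnP p k.
  have /minn_idPl-> := p_lt_k.
  by rewrite exprS ler_peMl ?ltW // mulrA gtr_pMl.
have /minn_idPr-> := leqW k_le_p.
by rewrite lexx /= gtr_pMl //; nra.
Qed.

Lemma rule_distortion_ge_weak_ratio (R : realType) (alpha t : R) (m : nat)
    (f : voting_rule m.+2) :
  0 <= alpha -> 1 < t -> alpha * t < 1 ->
  (((3 * t ^+ (m.+2)./2 - 1) / (t ^+ (m.+2)./2 + 1))%:E <= rule_distortion alpha f)%E.
Proof.
(* The agent iB ranking the winner at position k or later sits at the origin and
   the other agent at (T + 1, T - 1); the alternative iB ranks p sits at
   (2 t^(min p k), 0), at distance exactly T - 1 from the other agent. *)
move=> a_ge0 t_gt1 at_lt1.
set k := (m.+2)./2; set T := t ^+ k.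
have T_gt1 : 1 < T by rewrite exprn_egt1 //.
have [iB c_far] := exists_position_ge_half (f 2 (reverse_profile m)).
pose g (p : nat) : R := 2 * t ^+ minn p k.
have g_bounds p : 2 <= g p <= 2 * T.
  have tp_ge1 : 1 <= t ^+ minn p k by apply/exprn_ege1/ltW.
  have tp_leT : t ^+ minn p k <= T by apply/ler_weXn2l; [exact: ltW | exact: geq_minr].
  by rewrite /g; apply/andP; split; lra.
pose u (z : Defs.point 2 m.+2) : R := match z with
  | inl i => if i == iB then 0 else T + 1
  | inr a => g (position (reverse_profile m iB) a) end.
pose v (z : Defs.point 2 m.+2) : R :=
  if z is inl i then (if i == iB then 0 else T - 1) else 0.
pose d p q := Num.max (line_dist u p q) (line_dist v p q).
have dE i a : d (inl i) (inr a) =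
    if i == iB then g (position (reverse_profile m iB) a) else T - 1.
  have /andP[g_ge2 g_le] := g_bounds (position (reverse_profile m iB) a).
  rewrite /d /line_dist /=; case: ifP => _.
    by rewrite !sub0r !normrN normr0 ger0_norm ?max_l //; lra.
  rewrite subr0 (ger0_norm (x := T - 1)); last lra.
  by rewrite max_r // ler_norml; apply/andP; split; lra.
have sc_E a : social_cost d a = g (position (reverse_profile m iB) a) + (T - 1).
  exact: social_cost_two_agents.
pose b := (reverse_profile m iB).1 ord0.
apply: (rule_distortion_ge (sigma := reverse_profile m) (d := d) (b := b)).
- exact: max_metric (line_dist_metric u) (line_dist_metric v).
- apply: (consistent_by_position (D := fun i p => if i == iB then g p else T - 1)).
    by move=> i a; rewrite dE; case: eqP => // ->.
  move=> i j; rewrite !ffunE; case: ifP => _.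
    rewrite /g mulrCA ler_pM2l // ltr_pM2l //.
    exact: capped_geometric_chain.
  by rewrite lexx /=; nra.
- move=> a; rewrite sc_E.
  by have /andP[g_ge2 _] := g_bounds (position (reverse_profile m iB) a); lra.
- by apply: divr_ge0; lra.
- rewrite !sc_E position_perm /g /=.
  have /minn_idPr-> := c_far.
  rewrite expr0 mulr1 -/k -/T (_ : 2 + (T - 1) = T + 1); last lra.
  by rewrite mulrC divfK; [lra | rewrite gt_eqF //; lra].
Qed.

Lemma rule_distortion_ge_weak (R : realType) (alpha : R) (m : nat)
    (f : voting_rule m.+2) :
  0 <= alpha -> alpha < 1 ->
  ((1 + 2 * ((1 - alpha ^+ (m.+2)./2) / (1 + alpha ^+ (m.+2)./2)))%:E
     <= rule_distortion alpha f)%E.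
Proof.
move=> a_ge0 a_lt1; set k := (m.+2)./2; set b := alpha ^+ k.
have b_ge0 : 0 <= b by apply: exprn_ge0.
apply/lee_subgt0Pr => e e_gt0; rewrite -EFinB.
set L := 1 + _; set z := L - e.
have bz_lt : b * (1 + z) < 3 - z.
  have bL : (1 + b) * L = 3 - b by rewrite /L; field; rewrite gt_eqF //; lra.
  have : (1 + b) * z < (1 + b) * L by rewrite ltr_pM2l /z; lra.
  have -> : b * (1 + z) = (1 + b) * z + b - z by ring.
  by rewrite bL; lra.
have z_lt3 : z < 3 by nra.
have bT0_lt1 : b * ((1 + z) / (3 - z)) < 1.
  by rewrite mulrA ltr_pdivrMr ?mul1r //; lra.
have [t [t_gt1 at_lt1]] := exists_ratio_pow_gt a_ge0 a_lt1 (isT : 0 < k)%N bT0_lt1.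
rewrite ltr_pdivrMr; last lra.
set T := t ^+ k => T_gt.
apply: le_trans (rule_distortion_ge_weak_ratio f a_ge0 t_gt1 at_lt1).
rewrite lee_fin -/k -/T.
have T_gt1 : 1 < T by rewrite exprn_egt1.
rewrite ler_pdivlMr; last lra.
have -> : z * (T + 1) = (1 + z) - T * (3 - z) + 3 * T - 1 by ring.
lra.
Qed.

Theorem theorem1 (R : realType) (m : nat) (alpha : R) (f : voting_rule m) :
  (2 <= m)%N -> 0 <= alpha -> alpha <= 1 ->
  ((1 + 2 * Num.max alpha ((1 - alpha ^+ m./2) / (1 + alpha ^+ m./2)))%:E
     <= rule_distortion alpha f)%E.
Proof.
case: m f => [|[|m]] f // _ a_ge0 a_le1.
set b := alpha ^+ _.
have [b_ge0 b_le1] : 0 <= b /\ b <= 1 by rewrite exprn_ge0 ?exprn_ile1.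
have [a_le_w|w_lt_a] := leP alpha ((1 - b) / (1 + b)).
  apply: rule_distortion_ge_weak => //.
  rewrite lt_neqAle a_le1 andbT; apply: contraTneq a_le_w => a1.
  by rewrite /b a1 expr1n subrr mul0r; lra.
have w_ge0 : 0 <= (1 - b) / (1 + b) by apply: divr_ge0; lra.
by apply: rule_distortion_ge_strong; lra.
Qed.
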